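(* Let $G=(V,E)$ be an undirected unweighted network with girth $g$, let $S\subseteq V$ and let $k$ be a natural number. Let $M$ be the value computed by procedure Estimate$(G,S,k)$ (described in the context). Then $g\le M$, and if $\mathcal{C}\neq\emptyset$ then $M\le 2d(S)+g$.
   Context: Vertices have distinct identifiers $ID(\cdot)$; $d(u,v)$ is the hop distance. A vertex $v$ is closer to $u$ than $w$ if $d(u,v)<d(u,w)$, or $d(u,v)=d(u,w)$ and $ID(v)<ID(w)$. For $v\in V$, $U(S,k,v)$ is the set of the $k$ vertices of $S$ closest to $v$, or $S$ itself if $|S|\le k$. A source $s\in S$ covers a cycle $C$ if $s\in U(S,k,v)$ for all $v\in V(C)$; then $d(s,C)=\min_{v\in V(C)}d(s,v)$ and, for a covered cycle, $d(S,C)=\min\{d(s,C): s\in S \text{ covers } C\}$. $\mathcal{C}$ is the set of shortest cycles of $G$ covered by some source, and when $\mathcal{C}\neq\emptyset$, $d(S)=\min\{d(S,C):C\in\mathcal{C}\}$. Procedure Estimate$(G,S,k)$: (i) partial BFS trees rooted at the sources are built so that each vertex $v$ learns $U(S,k,v)$ together with $d(s,v)$ and a BFS parent $p(s,v)$ (a neighbor of $v$ with $d(s,p(s,v))=d(s,v)-1$; undefined if $v=s$) for each $s\in U(S,k,v)$; (ii) each vertex sends this information to its neighbors; (iii) each vertex $y$ sets $M_y=\min\, (d(s,x)+d(s,y)+1)$ over all neighbors $x$ of $y$ and all $s\in U(S,k,y)\cap U(S,k,x)$ with $p(s,x)\neq y$ and $p(s,y)\neq x$ ($M_y=\infty$ if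 there are none); (iv) $M=\min_{v\in V}M_v$ is computed and made known to all vertices. The girth $g$ is $\infty$ if $G$ is acyclic. *)

From mathcomp Require Import all_boot.
Set Implicit Arguments. Unset Strict Implicit. Unset Printing Implicit Defensive.

Section Defs.
Variable T : finType.
Variable e : rel T.
Variable ID : T -> nat.

(* Extended naturals: None = infinity. *)
Definition oleq (a b : option nat) : bool :=
  match a, b with
  | _, None => true
  | None, Some _ => false
  | Some m, Some n => m <= n
  end.
Definition omin (a b : option nat) : option nat := if oleq a b then a else b.

Fixpoint ball (u : T) (n : nat) : {set T} :=
  match n with
  | 0 => [set u]
  | n'.+1 => ball u n' :|: [set y | [exists x in ball u n', e x y]]
  end.

(* hop distance (meaningful for connected graphs: every distance is < #|T|) *)
Definition dist (u v : T) : nat := find (fun n => v \in ball u n) (iota 0 #|T|).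

Definition closer (u v w : T) : bool :=
  (dist u v < dist u w) || ((dist u v == dist u w) && (ID v < ID w)).

(* U(S,k,v): the k vertices of S closest to v (all of S if |S| <= k) *)
Definition Uset (S : {set T}) (k : nat) (v : T) : {set T} :=
  [set s in S | #|[set t in S | closer v t s]| < k].

Definition is_cycle (C : seq T) : bool := (2 < size C) && ucycleb e C.

Definition has_cycle_len (n : nat) : bool := [exists t : n.-tuple T, is_cycle t].

Definition girth : option nat :=
  \big[omin/None]_(n < #|T|.+1 | has_cycle_len n) Some (n : nat).

Definition is_shortest_cycle (C : seq T) : bool :=
  is_cycle C && (girth == Some (size C)).

Definition covers (S : {set T}) (k : nat) (s : T) (C : seq T) : bool :=
  all (fun v => s \in Uset S k v) C.

Definition dist_cycle (s : T) (C : seq T) : option nat :=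
  \big[omin/None]_(v <- C) Some (dist s v).

Definition dS (S : {set T}) (k : nat) : option nat :=
  \big[omin/None]_(n < #|T|.+1)
    \big[omin/None]_(t : n.-tuple T | is_shortest_cycle t)
      \big[omin/None]_(s in S | covers S k s t) dist_cycle s t.

(* BFS parents: p s v = None encodes "undefined" (v = s) *)
Definition valid_parents (S : {set T}) (k : nat) (p : T -> T -> option T) : Prop :=
  forall s v, s \in S -> s \in Uset S k v ->
    if v == s then p s v = None
    else exists w, p s v = Some w /\ e v w /\ (dist s w).+1 = dist s v.

Definition Mvert (S : {set T}) (k : nat) (p : T -> T -> option T) (y : T)
  : option nat :=
  \big[omin/None]_(x | e y x)
    \big[omin/None]_(s in Uset S k y :&: Uset S k x
                      | (p s x != Some y) && (p s y != Some x))
      Some (dist s x + dist s y + 1).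

Definition Mval (S : {set T}) (k : nat) (p : T -> T -> option T) : option nat :=
  \big[omin/None]_(y : T) Mvert S k p y.

End Defs.

From mathcomp Require Import all_boot zify.
Set Implicit Arguments. Unset Strict Implicit. Unset Printing Implicit Defensive.

(* Lower bound: a term d(s,x) + d(s,y) + 1 of M comes from an edge xy lying on
   neither BFS-tree path towards s; following the tree paths from x and from y
   until they first meet and closing with xy gives a cycle of at most that length.
   Upper bound: on a shortest cycle C covered by s, take the vertex m of C farthest
   from s.  Neither cycle-neighbour of m has m as its parent, and m has a single
   parent, so one of the two cycle edges at m is a non-tree edge.  Walking around C
   from a vertex v nearest to s bounds the distances of both its ends, so its term
   is at most 2 d(s,v) + g. *)

Lemma oleqxx a : oleq a a.
Proof. by case: a => /=. Qed.

Lemma oleq_Some m n : oleq (Some m) (Some n) = (m <= n).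
Proof. by []. Qed.

Lemma oleq_trans a b c : oleq a b -> oleq b c -> oleq a c.
Proof. by case: a; case: b; case: c => //= x y z; apply: leq_trans. Qed.

Lemma omin_lel a b : oleq (omin a b) a.
Proof.
rewrite /omin; case: ifP => [_|]; first exact: oleqxx.
by case: a; case: b => //= x y /negbT; lia.
Qed.

Lemma omin_ler a b : oleq (omin a b) b.
Proof. by rewrite /omin; case: ifP => // _; apply: oleqxx. Qed.

Section BigOmin.
Variables (I : eqType) (r : seq I) (P : pred I) (F : I -> option nat).

Lemma big_omin_le j : j \in r -> P j -> oleq (\big[omin/None]_(i <- r | P i) F i) (F j).
Proof.
elim: r => // a r' IH; rewrite inE big_cons => /orP[/eqP-> | jr] Pj.
  by rewrite Pj; apply: omin_lel.
case: ifP => _; last exact: IH.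
exact: oleq_trans (omin_ler _ _) (IH jr Pj).
Qed.

Lemma le_big_omin b :
  (forall i, P i -> oleq b (F i)) -> oleq b (\big[omin/None]_(i <- r | P i) F i).
Proof.
move=> bF; elim: r => [|a r' IH]; first by rewrite big_nil; case: (b).
by rewrite big_cons; case: ifP => // Pa; rewrite /omin; case: ifP => _ //; apply: bF.
Qed.

Lemma big_omin_SomeP m : \big[omin/None]_(i <- r | P i) F i = Some m ->
  exists i, [/\ i \in r, P i & F i = Some m].
Proof.
elim: r => [|a r' IH]; first by rewrite big_nil.
rewrite big_cons; case: ifP => [Pa|_ /IH[i [ir' Pi Fi]]]; last first.
  by exists i; rewrite inE ir' orbT.
rewrite /omin; case: ifP => _ => [Fa|/IH[i [ir' Pi Fi]]].
  by exists a; rewrite mem_head.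
by exists i; rewrite inE ir' orbT.
Qed.

End BigOmin.

Lemma split_first_hit (T : eqType) (a : pred T) x P : has a (x :: P) ->
  exists P1 P2, [/\ P = P1 ++ P2, a (last x P1) & ~~ has a (belast x P1)].
Proof.
move E: (x :: P) => Q aQ; move: E; case/split_find: aQ => z P1' P2 az.
case: P1' => [|x' P1] /= noP1 [-> PE].
  by exists [::], P.
by exists (rcons P1 z), P2; rewrite last_rcons belast_rcons.
Qed.

Section Distance.
Variables (T : finType) (e : rel T).
Hypothesis e_sym : symmetric e.
Hypothesis e_conn : forall u v : T, connect e u v.

Lemma ball_step u n x y : x \in ball e u n -> e x y -> y \in ball e u n.+1.
Proof. by move=> xn exy; rewrite /= !inE; apply/orP; right; apply/existsP; exists x; rewrite xn. Qed.

Lemma ball_path u P : path e u P -> last u P \in ball e u (size P).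
Proof.
elim/last_ind: P => [|P x IH]; first by rewrite /= inE.
rewrite rcons_path last_rcons size_rcons => /andP[/IH uP ex].
exact: ball_step uP ex.
Qed.

Lemma mem_ball_lt_card u v : exists2 n, n < #|T| & v \in ball e u n.
Proof.
have /connectP[P eP ->] := e_conn u v.
case: (shortenP eP) => P' eP' uP' _.
exists (size P'); last exact: ball_path.
by move/card_uniqP: uP' => /= <-; apply: max_card.
Qed.

Lemma dist_ball u v : v \in ball e u (dist e u v).
Proof.
have [n nT vn] := mem_ball_lt_card u v.
have hasn : has (fun n => v \in ball e u n) (iota 0 #|T|).
  by apply/hasP; exists n; rewrite // mem_iota.
have := nth_find 0 hasn; rewrite nth_iota //.
by rewrite -[X in _ < X](size_iota 0 #|T|) -has_find.
Qed.

Lemma ball_dist_le u v n : v \in ball e u n -> dist e u v <= n.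
Proof.
move=> vn; rewrite leqNgt; apply/negP => ltn.
have nT : n < #|T|.
  apply: leq_trans ltn _; rewrite -[X in _ <= X](size_iota 0 #|T|).
  exact: find_size.
by have := before_find 0 ltn; rewrite nth_iota // vn.
Qed.

Lemma dist_self u : dist e u u = 0.
Proof. by apply/eqP; rewrite -leqn0; apply: ball_dist_le; rewrite /= inE. Qed.

Lemma dist_eq0 u v : dist e u v = 0 -> v = u.
Proof. by move=> d0; have := dist_ball u v; rewrite d0 /= inE => /eqP. Qed.

Lemma dist_edge u x y : e x y -> dist e u y <= (dist e u x).+1.
Proof. by move=> exy; apply/ball_dist_le/(ball_step (dist_ball u x) exy). Qed.

Lemma dist_parent u v : v != u -> exists2 w, e v w & (dist e u w).+1 = dist e u v.
Proof.
move=> vu; have := dist_ball u v.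
case dv: (dist e u v) => [|m]; first by rewrite /= inE (negbTE vu).
rewrite /= !inE => /orP[/ball_dist_le | /existsP[w /andP[wm ewv]]].
  by rewrite dv ltnn.
exists w; first by rewrite e_sym.
by have := ball_dist_le wm; have := dist_edge u ewv; lia.
Qed.

Lemma dist_last_le u v P : path e v P -> dist e u (last v P) <= dist e u v + size P.
Proof.
elim: P v => [|w P IH] v /=; first by rewrite addn0.
case/andP=> evw /IH; have := dist_edge u evw; lia.
Qed.

Lemma dist_head_le u v P : path e v P -> dist e u v <= dist e u (last v P) + size P.
Proof.
elim: P v => [|w P IH] v /=; first by rewrite addn0.
case/andP=> evw /IH; rewrite e_sym in evw; have := dist_edge u evw; lia.
Qed.

Lemma dist_ends_le u v P w : path e v P -> w \in v :: P ->
  dist e u v + dist e u (last v P) <= 2 * dist e u w + size P.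
Proof.
move=> eP wP; case/splitPl: wP eP => P1 P2 P1w.
rewrite cat_path last_cat P1w size_cat.
case/andP=> /(dist_head_le u); rewrite P1w => le1 /(dist_last_le u) le2; lia.
Qed.

End Distance.

Section JoinPaths.
Variables (T : finType) (e : rel T).
Hypothesis e_sym : symmetric e.
Hypothesis e_irr : irreflexive e.

Lemma is_cycle_join x y P Q :
  e y x -> path e x P -> path e y Q -> last x P = last y Q ->
  head x P != y -> head y Q != x ->
  uniq (x :: P) -> uniq (y :: Q) -> ~~ has (mem (y :: Q)) (belast x P) ->
  is_cycle e (x :: P ++ rev (belast y Q)).
Proof.
move=> eyx eP eQ PQ hP hQ uP uQ PQdisj.
have xy : x != y by apply: contraTneq eyx => ->; rewrite e_irr.
apply/and3P; split.
- rewrite /= size_cat size_rev size_belast.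
  case: P Q hP hQ PQ {eP eQ uP uQ PQdisj} => [|p [|p' P]] [|q [|q' Q]] //= hP hQ PQ.
  + by rewrite -PQ eqxx in xy.
  + by rewrite PQ eqxx in hQ.
  + by rewrite PQ eqxx in hP.
- rewrite /cycle rcons_cat cat_path eP -rev_cons PQ.
  rewrite (_ : x :: belast y Q = belast x (y :: Q)) // -(last_cons x) rev_path /=.
  by rewrite eyx; apply: sub_path eQ => a b; rewrite e_sym.
move: uQ; rewrite [y :: Q]lastI rcons_uniq -PQ => /andP[aQ uQ].
rewrite -cat_cons cat_uniq uP rev_uniq uQ has_rev andbT /=.
apply/hasPn => z zQ; rewrite [x :: P]lastI mem_rcons inE negb_or.
apply/andP; split; first by apply: contraNneq aQ => <-.
by apply: contraTN (mem_belast zQ) => /(hasPn PQdisj).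
Qed.
End JoinPaths.


Section Descent.
Variables (T : finType) (e : rel T).
Hypothesis e_sym : symmetric e.
Hypothesis e_conn : forall u v : T, connect e u v.
Variable s : T.

Definition descent a b := e a b && ((dist e s b).+1 == dist e s a).

Lemma descent_path_e v P : path descent v P -> path e v P.
Proof. by apply: sub_path => a b /andP[]. Qed.

Lemma descent_path_dist v P : path descent v P -> dist e s (last v P) + size P = dist e s v.
Proof.
elim: P v => [|w P IH] v /=; first by rewrite addn0.
by case/andP=> /andP[_ /eqP <-] /IH; rewrite addnS => ->.
Qed.

Lemma descent_path_uniq v P : path descent v P -> uniq (v :: P).
Proof.
move=> dP; apply: (@sorted_uniq _ (fun a b => dist e s b < dist e s a)).
- by move=> a b c /= ba cb; apply: ltn_trans ba.
- by move=> a /=; rewrite ltnn.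
by apply: sub_path dP => a b /andP[_ /eqP <-].
Qed.

Lemma exists_descent_path v : exists2 P, path descent v P & last v P = s.
Proof.
elim: {v}(dist e s v) {-2}v (erefl (dist e s v)) => [|n IH] v dv.
  by exists [::]; rewrite //= (dist_eq0 e_conn dv).
have vs : v != s by apply: contra_eqN dv => /eqP->; rewrite dist_self.
have [w evw dw] := dist_parent e_sym e_conn vs.
have /IH[P dP Ps] : dist e s w = n by lia.
by exists (w :: P); rewrite //= dP /descent evw dw eqxx.
Qed.

End Descent.

Lemma girth_le_cycle (T : finType) (e : rel T) c :
  is_cycle e c -> oleq (girth e) (Some (size c)).
Proof.
move=> cc; have sc : size c < #|T|.+1.
  by case/and3P: cc => _ _ uc; rewrite ltnS -(card_uniqP uc) max_card.
rewrite /girth (_ : size c = Ordinal sc) //.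
apply: big_omin_le; first exact: mem_index_enum.
by apply/existsP; exists (in_tuple c).
Qed.

Lemma is_cycle_rot (T : finType) (e : rel T) n C : is_cycle e (rot n C) = is_cycle e C.
Proof. by rewrite /is_cycle /ucycleb size_rot rot_cycle rot_uniq. Qed.

Section BFS.
Variables (T : finType) (e : rel T) (ID : T -> nat).
Hypothesis e_sym : symmetric e.
Hypothesis e_irr : irreflexive e.
Hypothesis e_conn : forall u v : T, connect e u v.
Variables (S : {set T}) (k : nat) (p : T -> T -> option T).
Hypothesis hp : valid_parents e ID S k p.

Local Notation U := (Uset e ID S k).

Definition nontree_edge s x y :=
  [&& e x y, s \in U x, s \in U y, p s x != Some y & p s y != Some x].

Lemma Uset_sub s v : s \in U v -> s \in S.
Proof. by rewrite inE => /andP[]. Qed.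

Lemma parent_descent s v w : s \in U v -> p s v = Some w -> descent e s v w.
Proof.
move=> sv pv; have := hp (Uset_sub sv) sv.
case: eqP => [_|_ [w' [pw' [evw' dw']]]]; first by rewrite pv.
by move: pv; rewrite pw' => -[<-]; rewrite /descent evw' dw' eqxx.
Qed.

Lemma descent_path_from_parent s x : s \in U x ->
  exists P, [/\ path (descent e s) x P, last x P = s & P = [::] \/ p s x = Some (head x P)].
Proof.
move=> sx; case px: (p s x) => [w|].
  have [P dP Ps] := exists_descent_path e_sym e_conn s w.
  exists (w :: P); split => //=; last by right.
  by rewrite dP andbT; apply: parent_descent.
have xs : x = s.
  have := hp (Uset_sub sx) sx.
  by case: eqP => [//| _ [w [pw _]]]; rewrite pw in px.
by exists [::]; split; [|rewrite xs|left].
Qed.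

Lemma nontree_edge_cycle s x y : nontree_edge s x y ->
  exists2 c, is_cycle e c & size c <= dist e s x + dist e s y + 1.
Proof.
case/and5P=> exy sx sy pxy pyx.
have xy : x != y by apply: contraTneq exy => ->; rewrite e_irr.
have [PA [dPA PAs hPA]] := descent_path_from_parent sx.
have [PB [dPB PBs hPB]] := descent_path_from_parent sy.
have head_ne u v R1 R2 : u != v -> p s u != Some v ->
    R1 ++ R2 = [::] \/ p s u = Some (head u (R1 ++ R2)) -> head u R1 != v.
  by move=> uv puv; case: R1 => //= z R1 [//|pu]; apply: contraNneq puv => <-; rewrite pu.
have meet : has (mem (y :: PB)) (x :: PA).
  by apply/hasP; exists s; [rewrite -PAs | rewrite -PBs]; apply: mem_last.
have [P [P' [PAE aB noB]]] := split_first_hit meet.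
case/splitPl: aB (dPB) (hPB) noB => Q Q' Qa; rewrite cat_path => /andP[dQ _] hQ noB.
move: dPA hPA; rewrite PAE cat_path => /andP[dP _] hP.
exists (x :: P ++ rev (belast y Q)).
  apply: (is_cycle_join e_sym e_irr).
  - by rewrite e_sym.
  - exact: descent_path_e dP.
  - exact: descent_path_e dQ.
  - by rewrite Qa.
  - exact: head_ne hP.
  - by apply: head_ne hQ; rewrite // eq_sym.
  - exact: descent_path_uniq dP.
  - exact: descent_path_uniq dQ.
  - by apply: contra noB; apply: sub_has => z /=; rewrite -cat_cons mem_cat => ->.
have := descent_path_dist dP; have := descent_path_dist dQ; rewrite Qa.
have -> : size (x :: P ++ rev (belast y Q)) = (size P + size Q).+1.
  by rewrite /= size_cat size_rev size_belast.
by move=> <- <-; rewrite addn1 ltnS addnACA leq_addl.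
Qed.

Lemma Mval_le_nontree s x y : nontree_edge s x y ->
  oleq (Mval e ID S k p) (Some (dist e s x + dist e s y + 1)).
Proof.
case/and5P=> exy sx sy pxy pyx.
apply: oleq_trans (big_omin_le _ (mem_index_enum y) (erefl true)) _.
rewrite e_sym in exy; apply: oleq_trans (big_omin_le _ (mem_index_enum x) exy) _.
by apply: big_omin_le; rewrite ?mem_index_enum // inE sx sy pxy pyx.
Qed.

Lemma girth_le_Mval : oleq (girth e) (Mval e ID S k p).
Proof.
apply: le_big_omin => y _; apply: le_big_omin => x eyx.
apply: le_big_omin => s /andP[]; rewrite inE => /andP[sy sx] /andP[pxy pyx].
have [|c cc sc] := @nontree_edge_cycle s x y.
  by rewrite /nontree_edge e_sym eyx sx sy pxy pyx.
by apply: oleq_trans (girth_le_cycle cc) _; apply: sc.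
Qed.

Lemma parent_dist_lt s u w : s \in U u -> p s u = Some w -> dist e s w < dist e s u.
Proof. by move=> su /(parent_descent su) /andP[_ /eqP <-]. Qed.

Lemma Mval_le_covered_cycle s C v : is_cycle e C -> {in C, forall u, s \in U u} ->
  v \in C -> oleq (Mval e ID S k p) (Some (2 * dist e s v + size C)).
Proof.
move=> cC covC vC.
have [m mC mmax] : exists2 m, m \in C & {in C, forall u, dist e s u <= dist e s m}.
  by case: (arg_maxnP (dist e s) vC) => m mC mmax; exists m.
case/rot_to: mC => i q rotC.
have {}cC : is_cycle e (m :: q) by rewrite -rotC is_cycle_rot.
have memC u : (u \in C) = (u \in m :: q) by rewrite -rotC mem_rot.
have sizeC : size C = (size q).+1 by rewrite -(size_rot i) rotC.
clear rotC.
case/and3P: cC; case: q => [|n1 q] // in memC sizeC * => q_gt1.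
rewrite /cycle rcons_cons /= rcons_path => /and3P[emn1 en1q en2m] uC.
set n2 := last n1 q in en2m.
have sU u : u \in m :: n1 :: q -> s \in U u by rewrite -memC; apply: covC.
have vC' : v \in m :: n1 :: q by rewrite -memC.
have nmax u : u \in m :: n1 :: q -> p s u != Some m.
  move=> uC'; apply/eqP => /(parent_dist_lt (sU _ uC')).
  by rewrite ltnNge mmax ?memC.
have n1n2 : n1 != n2.
  move: uC q_gt1; rewrite /n2; case: (q) => [|z r] // /andP[_ /andP[n1zr _]] _.
  by apply: contraNneq n1zr => ->; apply: (mem_last z).
have bound a b : nontree_edge s a b ->
    dist e s a + dist e s b <= 2 * dist e s v + size (n1 :: q) ->
    oleq (Mval e ID S k p) (Some (2 * dist e s v + size C)).
  move=> ab le_ab; apply: oleq_trans (Mval_le_nontree ab) _.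
  by rewrite oleq_Some sizeC addn1 addnS ltnS.
have Cn1 : n1 \in m :: n1 :: q by rewrite !inE eqxx orbT.
have Cn2 : n2 \in m :: n1 :: q by rewrite inE mem_last orbT.
have Cm : m \in m :: n1 :: q by rewrite mem_head.
case: (eqVneq (p s m) (Some n1)) => [pmn1 | pmn1].
  apply: (bound n2 m).
    by rewrite /nontree_edge en2m !sU ?nmax // pmn1 (inj_eq Some_inj).
  by rewrite addnC; apply: (dist_ends_le e_sym e_conn) vC'; rewrite /= emn1 en1q.
apply: (bound m n1); first by rewrite /nontree_edge emn1 pmn1 !sU ?nmax.
have /(dist_ends_le e_sym e_conn s) : path e n1 (rcons q m) by rewrite rcons_path en1q en2m.
move/(_ v); rewrite last_rcons size_rcons addnC; apply.
by move: vC'; rewrite !(inE, mem_rcons) orbCA.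
Qed.

End BFS.

Lemma dS_attained (T : finType) (e : rel T) (ID : T -> nat) (S : {set T}) (k : nat) :
  (exists C, is_shortest_cycle e C /\ exists s, s \in S /\ covers e ID S k s C) ->
  exists C s v, [/\ is_shortest_cycle e C, covers e ID S k s C, v \in C &
                    dS e ID S k = Some (dist e s v)].
Proof.
case=> [[|v0 C] [shC [s0 [s0S covC]]]]; first by case/andP: shC => /andP[].
have sC : size (v0 :: C) < #|T|.+1.
  by case/andP: shC => /and3P[_ _ uC] _; rewrite ltnS -(card_uniqP uC) max_card.
have : oleq (dS e ID S k) (Some (dist e s0 v0)).
  apply: oleq_trans (big_omin_le _ (mem_index_enum (Ordinal sC)) erefl) _.
  apply: oleq_trans (big_omin_le _ (mem_index_enum (in_tuple (v0 :: C))) shC) _.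
  apply: oleq_trans (big_omin_le _ (mem_index_enum s0) _) _; first by rewrite s0S.
  exact: big_omin_le (mem_head _ _) erefl.
case dSd: (dS e ID S k) => [d|] // _.
have [n [_ _ /big_omin_SomeP[t [_ sht /big_omin_SomeP[s [_ /andP[_ covt]]]]]]] :=
  big_omin_SomeP dSd.
by case/big_omin_SomeP=> v [vt _ [dv]]; exists t, s, v; rewrite dv.
Qed.

Theorem mainTheorem7 (T : finType) (e : rel T) (ID : T -> nat)
  (e_sym : symmetric e) (e_irr : irreflexive e)
  (e_conn : forall u v : T, connect e u v)
  (ID_inj : injective ID)
  (S : {set T}) (k : nat) (p : T -> T -> option T)
  (hp : valid_parents e ID S k p) :
  oleq (girth e) (Mval e ID S k p) /\
  ((exists C : seq T, is_shortest_cycle e C /\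
      exists s, s \in S /\ covers e ID S k s C) ->
   exists d g : nat, dS e ID S k = Some d /\ girth e = Some g /\
     oleq (Mval e ID S k p) (Some (2 * d + g))).
Proof.
split; first exact: girth_le_Mval.
case/dS_attained=> C [s [v [/andP[cC /eqP gC] covC vC dSv]]].
exists (dist e s v), (size C); split=> //; split=> //.
by apply: Mval_le_covered_cycle => // u; apply: (allP covC).
Qed.
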